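(* Let $F,G$ be complete Heyting sheaves (frame sheaves) on a locale $X$ and $\alpha:F\to G$ an order-preserving morphism. Then $\alpha$ is a frame morphism if and only if for each $u\in\mathcal{O}(X)$, $\alpha_u:F(u)\to G(u)$ is a frame homomorphism and for all $v\le u$ in $\mathcal{O}(X)$, $\alpha_u\circ f_{v,u}=g_{v,u}\circ\alpha_v$, where $f_{v,u}:F(v)\to F(u)$ and $g_{v,u}:G(v)\to G(u)$ are the left adjoints of the restriction maps $F(u)\to F(v)$ and $G(u)\to G(v)$.
   Context: Let $X$ be a locale with frame of opens $\mathcal{O}(X)$. A posheaf on $X$ is a sheaf of sets $F$ with (POS1) each $F(u)$ a poset; (POS2) restriction maps $F(u)\to F(v)$, $x\mapsto x|_v$ ($v\le u$), order-preserving; (POS3) if $u=\bigvee_i u_i$ and $s,t\in F(u)$ satisfy $s|_{u_i}\le t|_{u_i}$ for all $i$, then $s\le t$. A frame sheaf (complete Heyting sheaf) is a posheaf $F$ such that each $F(u)$ is a frame, each restriction map $F(u)\to F(v)$ ($v\le u$) is surjective and has a left adjoint $l_{v,u}$ and a right adjoint, and $x\wedge l_{v,u}(y)=l_{v,u}(x|_v\wedge y)$ for $x\in F(u)$, $y\in F(v)$. A morphism $\alpha$ of posheaves is order-preserving if each $\alpha_u$ is monotone. For complete posheaves, $sup_F:\mathbb{P}F\to F$ sends a subsheaf $S$ of $F^u$ (the restriction of $F$ to $\downarrow u$) to the least $z\in F(u)$ with $S(v)\subseteq\{y\mid y\le z|_v\}$ for all $v\le u$; $\alpha_*$ sends $S$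 to the subsheaf of $G^u$ generated by $v\mapsto\alpha_v(S(v))$; $\alpha$ is sup-preserving if $sup_G\circ\alpha_*=\alpha\circ sup_F$. $\alpha$ preserves finite meets if $m_G\circ(\alpha\times\alpha)=\alpha\circ m_F$, where $m_F$ is componentwise binary meet. A frame morphism is a sup-preserving morphism that preserves finite meets. *)

Set Implicit Arguments.
Unset Strict Implicit.

Definition is_lub {A : Type} (le : A -> A -> Prop) (S : A -> Prop) (z : A) : Prop :=
  (forall x, S x -> le x z) /\ (forall y, (forall x, S x -> le x y) -> le z y).

Definition is_glb2 {A : Type} (le : A -> A -> Prop) (a b m : A) : Prop :=
  le m a /\ le m b /\ (forall y, le y a -> le y b -> le y m).

Definition is_poset {A : Type} (le : A -> A -> Prop) : Prop :=
  (forall x, le x x) /\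
  (forall x y z, le x y -> le y z -> le x z) /\
  (forall x y, le x y -> le y x -> x = y).

Definition is_frame {A : Type} (le : A -> A -> Prop) : Prop :=
  is_poset le /\
  (forall S : A -> Prop, exists z, is_lub le S z) /\
  (forall a b : A, exists m, is_glb2 le a b m) /\
  (forall (a : A) (S : A -> Prop) (j m : A),
      is_lub le S j -> is_glb2 le a j m ->
      is_lub le (fun x => exists s, S s /\ is_glb2 le a s x) m).

Definition is_frame_hom {A B : Type} (leA : A -> A -> Prop) (leB : B -> B -> Prop)
  (f : A -> B) : Prop :=
  (forall (S : A -> Prop) z, is_lub leA S z ->
       is_lub leB (fun y => exists x, S x /\ y = f x) (f z)) /\
  (forall a b m, is_glb2 leA a b m -> is_glb2 leB (f a) (f b) (f m)).

Record Locale := {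
  opens :> Type;
  ole : opens -> opens -> Prop;
  ole_frame : is_frame ole
}.
Arguments ole : clear implicits.

Record Presheaf (X : Locale) := {
  sec :> X -> Type;
  res : forall u v : X, ole X v u -> sec u -> sec v;
  res_id : forall (u : X) (p : ole X u u) x, res p x = x;
  res_comp : forall (u v w : X) (p : ole X v u) (q : ole X w v) (r : ole X w u) x,
      res q (res p x) = res r x
}.
Arguments res {X} _ {u v} _ _.

Definition covers (X : Locale) (u : X) (I : Type) (ui : I -> X) : Prop :=
  is_lub (ole X) (fun w => exists i, w = ui i) u.

Definition is_sheaf (X : Locale) (F : Presheaf X) : Prop :=
  forall (u : X) (I : Type) (ui : I -> X) (pi : forall i, ole X (ui i) u)
         (s : forall i, F (ui i)),
    covers u ui ->
    (forall i j (w : X) (p : ole X w (ui i)) (q : ole X w (ui j)),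
        is_glb2 (ole X) (ui i) (ui j) w -> res F p (s i) = res F q (s j)) ->
    (exists t : F u, forall i, res F (pi i) t = s i) /\
    (forall t t' : F u, (forall i, res F (pi i) t = s i) ->
                        (forall i, res F (pi i) t' = s i) -> t = t').

Definition is_posheaf (X : Locale) (F : Presheaf X)
  (le : forall u : X, F u -> F u -> Prop) : Prop :=
  is_sheaf F /\
  (forall u, is_poset (le u)) /\
  (forall (u v : X) (p : ole X v u) x y, le u x y -> le v (res F p x) (res F p y)) /\
  (forall (u : X) (I : Type) (ui : I -> X) (pi : forall i, ole X (ui i) u) s t,
                covers u ui -> (forall i, le (ui i) (res F (pi i) s) (res F (pi i) t)) ->
                le u s t).

Record PoSheaf (X : Locale) := {
  psh :> Presheaf X;
  ple : forall u : X, psh u -> psh u -> Prop;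
  psh_pos : @is_posheaf X psh ple
}.
Arguments ple {X} _ {u} _ _.

Definition is_left_adjoint (X : Locale) (F : PoSheaf X) (u v : X) (p : ole X v u)
  (f : F v -> F u) : Prop :=
  forall (y : F v) (x : F u), ple F (f y) x <-> ple F y (res F p x).

Definition is_right_adjoint (X : Locale) (F : PoSheaf X) (u v : X) (p : ole X v u)
  (r : F v -> F u) : Prop :=
  forall (x : F u) (y : F v), ple F (res F p x) y <-> ple F x (r y).
Arguments is_left_adjoint {X} F {u v} p f.
Arguments is_right_adjoint {X} F {u v} p r.

Definition is_frame_sheaf (X : Locale) (F : PoSheaf X) : Prop :=
  (forall u : X, is_frame (@ple X F u)) /\
  (forall (u v : X) (p : ole X v u),
      (forall y : F v, exists x : F u, res F p x = y) /\
      (exists l : F v -> F u,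
          is_left_adjoint F p l /\
          (* Frobenius: x /\ l(y) = l(x|_v /\ y) *)
          (forall (x : F u) (y : F v) m1 m2,
              is_glb2 (@ple X F u) x (l y) m1 ->
              is_glb2 (@ple X F v) (res F p x) y m2 -> m1 = l m2)) /\
      (exists r : F v -> F u, is_right_adjoint F p r)).

Definition is_morphism (X : Locale) (F G : Presheaf X) (a : forall u : X, F u -> G u) : Prop :=
  forall (u v : X) (p : ole X v u) (x : F u), a v (res F p x) = res G p (a u x).

Definition order_preserving (X : Locale) (F G : PoSheaf X) (a : forall u : X, F u -> G u) : Prop :=
  forall (u : X) (x y : F u), ple F x y -> ple G (a u x) (a u y).

(* S is (the data of) a subsheaf of F^u, the restriction of F to the down-set of u:
   S v is a subset of F v, nonempty only for v <= u, closed under restriction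
   and under gluing along covers. *)
Definition is_subsheaf_at (X : Locale) (F : Presheaf X) (u : X)
  (S : forall v : X, F v -> Prop) : Prop :=
  (forall v x, S v x -> ole X v u) /\
  (forall (v w : X) (p : ole X w v) (x : F v), S v x -> S w (res F p x)) /\
  (forall (v : X) (I : Type) (vi : I -> X) (pi : forall i, ole X (vi i) v) (x : F v),
      ole X v u -> covers v vi -> (forall i, S (vi i) (res F (pi i) x)) -> S v x).

Arguments is_subsheaf_at {X} F u S.

Definition is_sup (X : Locale) (F : PoSheaf X) (u : X)
  (S : forall v : X, F v -> Prop) (z : F u) : Prop :=
  (forall (v : X) (p : ole X v u) (y : F v), S v y -> ple F y (res F p z)) /\
  (forall z' : F u, (forall (v : X) (p : ole X v u) (y : F v), S v y -> ple F y (res F p z'))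
                    -> ple F z z').

Arguments is_sup {X} F u S z.

Definition alpha_star (X : Locale) (F G : Presheaf X) (a : forall u : X, F u -> G u)
  (u : X) (S : forall v : X, F v -> Prop) : forall v : X, G v -> Prop :=
  fun v t => forall T : forall w : X, G w -> Prop,
      is_subsheaf_at G u T ->
      (forall (w : X) (y : F w), S w y -> T w (a w y)) -> T v t.

Definition sup_preserving (X : Locale) (F G : PoSheaf X) (a : forall u : X, F u -> G u) : Prop :=
  forall (u : X) (S : forall v : X, F v -> Prop) (z : F u),
    is_subsheaf_at F u S -> is_sup F u S z -> is_sup G u (alpha_star a u S) (a u z).

Definition preserves_finite_meets (X : Locale) (F G : PoSheaf X) (a : forall u : X, F u -> G u) : Prop :=
  forall (u : X) (x y m : F u),
    is_glb2 (@ple X F u) x y m -> is_glb2 (@ple X G u) (a u x) (a u y) (a u m).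

Definition is_frame_morphism (X : Locale) (F G : PoSheaf X) (a : forall u : X, F u -> G u) : Prop :=
  sup_preserving a /\ preserves_finite_meets a.

(* An upper bound of a subsheaf S of F^u is an element z : F u with
   x <= z|_w for all x in S(w), i.e. (by adjunction) f_{w,u} x <= z; so
   sup S is the join in F(u) of the elements f_{w,u} x.  Hence fibrewise
   join-preservation plus commutation with the left adjoints gives
   sup-preservation.  Conversely, the principal subsheaf generated by
   y : F v has supremum f_{v,u} y while its image under alpha_* has supremum
   g_{v,u} (alpha_v y), so a sup-preserving alpha commutes with the left
   adjoints; and applying sup-preservation to the subsheaf of sections below
   both a join z and (after alpha) a bound y shows alpha_u z <= y. *)

Set Implicit Arguments.
Unset Strict Implicit.

Lemma ole_refl (X : Locale) (u : X) : ole X u u.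
Proof. destruct (ole_frame X) as [[Hrefl _] _]. apply Hrefl. Qed.

Lemma ole_trans (X : Locale) (u v w : X) : ole X u v -> ole X v w -> ole X u w.
Proof. destruct (ole_frame X) as [[_ [Htrans _]] _]. apply Htrans. Qed.

Section PoSheafOrder.

Variables (X : Locale) (F : PoSheaf X).

Lemma ple_refl (u : X) (x : F u) : ple F x x.
Proof. destruct (psh_pos F) as [_ [Hpos _]]. apply (Hpos u). Qed.

Lemma ple_trans (u : X) (x y z : F u) : ple F x y -> ple F y z -> ple F x z.
Proof. destruct (psh_pos F) as [_ [Hpos _]]. apply (Hpos u). Qed.

Lemma ple_anti (u : X) (x y : F u) : ple F x y -> ple F y x -> x = y.
Proof. destruct (psh_pos F) as [_ [Hpos _]]. apply (Hpos u). Qed.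

Lemma ple_res (u v : X) (p : ole X v u) (x y : F u) :
  ple F x y -> ple F (res F p x) (res F p y).
Proof. destruct (psh_pos F) as [_ [_ [Hmono _]]]. apply Hmono. Qed.

Lemma ple_glue (u : X) (I : Type) (ui : I -> X) (pi : forall i, ole X (ui i) u)
  (s t : F u) :
  covers u ui -> (forall i, ple F (res F (pi i) s) (res F (pi i) t)) -> ple F s t.
Proof. destruct (psh_pos F) as [_ [_ [_ Hglue]]]. apply Hglue. Qed.

Definition upper_bound (u : X) (S : forall v : X, F v -> Prop) (z : F u) : Prop :=
  forall (v : X) (p : ole X v u) (y : F v), S v y -> ple F y (res F p z).
Arguments upper_bound {u} S z.

Lemma is_sup_unique (u : X) (S : forall v : X, F v -> Prop) (z z' : F u) :
  is_sup F u S z -> is_sup F u S z' -> z = z'.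
Proof.
  intros [Hub Hleast] [Hub' Hleast'].
  apply ple_anti; [apply Hleast; exact Hub' | apply Hleast'; exact Hub].
Qed.

Definition down (v : X) (y : F v) (w : X) (t : F w) : Prop :=
  ole X w v /\ forall p : ole X w v, ple F t (res F p y).
Arguments down {v} y w t.

Lemma down_self (v : X) (y t : F v) : ple F t y -> down y v t.
Proof.
  intro Hty. split; [apply ole_refl |]. intro p. rewrite res_id. exact Hty.
Qed.

Lemma down_subsheaf (u v : X) (y : F v) :
  ole X v u -> is_subsheaf_at F u (down y).
Proof.
  intro Hvu. split; [| split].
  - intros w t [Hwv _]. exact (ole_trans Hwv Hvu).
  - intros w w' q t [Hwv Hty].
    assert (Hw'v : ole X w' v) by exact (ole_trans q Hwv).
    split; [exact Hw'v |]. intro r.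
    rewrite <- (res_comp Hwv q r). exact (ple_res q (Hty Hwv)).
  - intros w I wi pi t _ Hcov Hti.
    assert (Hwv : ole X w v).
    { destruct Hcov as [_ Hleast]. apply Hleast.
      intros w' [i ->]. exact (proj1 (Hti i)). }
    split; [exact Hwv |]. intro q.
    apply (ple_glue (pi := pi) Hcov). intro i.
    destruct (Hti i) as [Hwiv Hle].
    rewrite (res_comp q (pi i) Hwiv). apply Hle.
Qed.

Lemma upper_bound_down (u v : X) (p : ole X v u) (y : F v) (z : F u) :
  upper_bound (down y) z <-> ple F y (res F p z).
Proof.
  split.
  - intro Hz. apply Hz. apply down_self, ple_refl.
  - intros Hyz w q t [Hwv Hty].
    apply (ple_trans (Hty Hwv)).
    rewrite <- (res_comp p Hwv q). exact (ple_res Hwv Hyz).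
Qed.

Lemma is_sup_down_left_adjoint (u v : X) (p : ole X v u) (f : F v -> F u)
  (y : F v) :
  is_left_adjoint F p f -> is_sup F u (down y) (f y).
Proof.
  intro Hf. split.
  - apply (upper_bound_down p). apply Hf, ple_refl.
  - intros z Hz. apply Hf. exact (proj1 (upper_bound_down p y z) Hz).
Qed.

Definition left_adjoint_images (u : X) (S : forall v : X, F v -> Prop) (c : F u)
  : Prop :=
  exists (w : X) (p : ole X w u) (x : F w) (f : F w -> F u),
    S w x /\ is_left_adjoint F p f /\ c = f x.

Lemma is_sup_is_lub_left_adjoint_images (u : X) (S : forall v : X, F v -> Prop)
  (z : F u) :
  (forall (w : X) (p : ole X w u), exists f, is_left_adjoint F p f) ->
  is_sup F u S z -> is_lub (@ple X F u) (left_adjoint_images S) z.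
Proof.
  intros Hadj [Hub Hleast]. split.
  - intros c [w [p [x [f [Hx [Hf ->]]]]]]. apply Hf. exact (Hub w p x Hx).
  - intros z' Hz'. apply Hleast. intros w p x Hx.
    destruct (Hadj w p) as [f Hf]. apply Hf. apply Hz'.
    exists w, p, x, f. auto.
Qed.

End PoSheafOrder.

Arguments down {X} F {v} y w t.
Arguments upper_bound {X} F {u} S z.

Lemma frame_sheaf_left_adjoint (X : Locale) (F : PoSheaf X) :
  is_frame_sheaf F ->
  forall (u v : X) (p : ole X v u), exists f, is_left_adjoint F p f.
Proof.
  intros [_ Hres] u v p. destruct (Hres u v p) as [_ [[f [Hf _]] _]]. eauto.
Qed.

Lemma subsheaf_and (X : Locale) (F : Presheaf X) (u : X)
  (S T : forall w : X, F w -> Prop) :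
  is_subsheaf_at F u S -> is_subsheaf_at F u T ->
  is_subsheaf_at F u (fun w x => S w x /\ T w x).
Proof.
  intros [HS1 [HS2 HS3]] [HT1 [HT2 HT3]]. split; [| split].
  - intros v x [Hx _]. eauto.
  - intros v w p x [HSx HTx]. split; eauto.
  - intros v I vi pi x Hvu Hcov Hx. split.
    + apply (HS3 v I vi pi); auto. intro i. apply Hx.
    + apply (HT3 v I vi pi); auto. intro i. apply Hx.
Qed.

Section MorphismSups.

Variables (X : Locale) (F G : PoSheaf X) (a : forall u : X, F u -> G u).
Arguments a : clear implicits.
Hypotheses (Ha : is_morphism a) (Hord : order_preserving a).

Lemma subsheaf_preimage (u : X) (T : forall w : X, G w -> Prop) :
  is_subsheaf_at G u T -> is_subsheaf_at F u (fun w x => T w (a w x)).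
Proof.
  intros [HT1 [HT2 HT3]]. split; [| split].
  - intros v x Hx. exact (HT1 _ _ Hx).
  - intros v w p x Hx. rewrite Ha. exact (HT2 _ _ p _ Hx).
  - intros v I vi pi x Hvu Hcov Hx. apply (HT3 v I vi pi); auto.
    intro i. rewrite <- Ha. apply Hx.
Qed.

Lemma alpha_star_image (u : X) (S : forall v : X, F v -> Prop) (w : X) (x : F w) :
  S w x -> alpha_star a u S (a w x).
Proof. intros Hx T _ HT. exact (HT w x Hx). Qed.

(* alpha_*(S) lies in the principal subsheaf of every upper bound of the
   image of S, since that principal subsheaf is a subsheaf containing it. *)
Lemma upper_bound_alpha_star (u : X) (S : forall v : X, F v -> Prop) (y : G u) :
  is_subsheaf_at F u S ->
  upper_bound G (alpha_star a u S) y <->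
  (forall (w : X) (p : ole X w u) (x : F w), S w x -> ple G (a w x) (res G p y)).
Proof.
  intros [HSu _]. split.
  - intros Hy w p x Hx. exact (Hy w p _ (alpha_star_image Hx)).
  - intros Hy v p t Ht.
    assert (Hdown : down G y v t).
    { apply Ht; [exact (down_subsheaf y (ole_refl u)) |].
      intros w x Hx. split; [exact (HSu _ _ Hx) |]. intro q. exact (Hy w q x Hx). }
    exact (proj2 Hdown p).
Qed.

Lemma alpha_upper_bound (u : X) (S : forall v : X, F v -> Prop) (z : F u) :
  upper_bound F S z ->
  forall (w : X) (p : ole X w u) (x : F w), S w x -> ple G (a w x) (res G p (a u z)).
Proof. intros Hz w p x Hx. rewrite <- Ha. exact (Hord (Hz w p x Hx)). Qed.

Lemma sup_preserving_fibre_lub : sup_preserving a ->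
  forall (u : X) (S0 : F u -> Prop) (z : F u), is_lub (@ple X F u) S0 z ->
  is_lub (@ple X G u) (fun b => exists x, S0 x /\ b = a u x) (a u z).
Proof.
  intros Hsup u S0 z [Hub Hleast]. split.
  - intros b [x [Hx ->]]. exact (Hord (Hub x Hx)).
  - intros y Hy.
    set (S := fun w x => down F z w x /\ down G y w (a w x)).
    assert (HS : is_subsheaf_at F u S).
    { apply subsheaf_and; [exact (down_subsheaf z (ole_refl u)) |].
      apply subsheaf_preimage. exact (down_subsheaf y (ole_refl u)). }
    assert (Hz : is_sup F u S z).
    { split.
      - intros v p x [[_ Hxz] _]. apply Hxz.
      - intros z' Hz'. apply Hleast. intros s Hs.
        assert (Hsz : ple F s (res F (ole_refl u) z')).
        { apply Hz'. split; apply down_self; [exact (Hub s Hs) |].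
          apply Hy. eauto. }
        rewrite res_id in Hsz. exact Hsz. }
    apply (proj2 (Hsup u S z HS Hz)).
    apply (upper_bound_alpha_star y HS). intros w p x [_ [_ Hxy]]. apply Hxy.
Qed.

Lemma is_sup_alpha_star_down (u v : X) (p : ole X v u) (g : G v -> G u) (y : F v) :
  is_left_adjoint G p g -> is_sup G u (alpha_star a u (down F y)) (g (a v y)).
Proof.
  intro Hg.
  assert (Hub : forall z, upper_bound G (alpha_star a u (down F y)) z <->
                          ple G (a v y) (res G p z)).
  { intro z. split.
    - intro Hz. apply (proj1 (upper_bound_alpha_star z (down_subsheaf y p)) Hz).
      apply down_self, ple_refl.
    - intro Hyz. apply (proj2 (upper_bound_alpha_star z (down_subsheaf y p))).
      intros w q x [Hwv Hxy].
      apply (ple_trans (Hord (Hxy Hwv))). rewrite Ha.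
      rewrite <- (res_comp p Hwv q). exact (ple_res Hwv Hyz). }
  split.
  - apply Hub. apply Hg, ple_refl.
  - intros z Hz. apply Hg. exact (proj1 (Hub z) Hz).
Qed.

End MorphismSups.

Theorem lemma3p3 (X : Locale) (F G : PoSheaf X)
  (HF : is_frame_sheaf F) (HG : is_frame_sheaf G)
  (a : forall u : X, F u -> G u)
  (Ha : is_morphism a) (Hord : order_preserving a) :
  is_frame_morphism a <->
  ((forall u : X, is_frame_hom (@ple X F u) (@ple X G u) (a u)) /\
   (forall (u v : X) (p : ole X v u) (f : F v -> F u) (g : G v -> G u),
       is_left_adjoint F p f -> is_left_adjoint G p g ->
       forall y : F v, a u (f y) = g (a v y))).
Proof.
  split.
  - intros [Hsup Hmeet]. split.
    + intro u. split; [exact (sup_preserving_fibre_lub Ha Hord Hsup (u := u)) |].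
      apply Hmeet.
    + intros u v p f g Hf Hg y.
      apply (is_sup_unique (F := G) (u := u) (S := alpha_star a u (down F y))).
      * exact (Hsup u _ _ (down_subsheaf y p) (is_sup_down_left_adjoint y Hf)).
      * exact (is_sup_alpha_star_down Ha Hord y Hg).
  - intros [Hhom Hcomm]. split; [| intro u; apply (Hhom u)].
    intros u S z HS Hz. split.
    + apply (upper_bound_alpha_star _ _ HS).
      exact (alpha_upper_bound Ha Hord (proj1 Hz)).
    + intros z' Hz'.
      assert (Hlub := is_sup_is_lub_left_adjoint_images
                        (fun w p => frame_sheaf_left_adjoint HF p) Hz).
      apply (proj1 (Hhom u) _ _ Hlub).
      intros b [c [[w [p [x [f [Hx [Hf ->]]]]]] ->]].
      destruct (frame_sheaf_left_adjoint HG p) as [g Hg].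
      rewrite (Hcomm u w p f g Hf Hg x). apply Hg.
      exact (proj1 (upper_bound_alpha_star a z' HS) Hz' w p x Hx).
Qed.
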